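(* Let $F_0$ be a QF-NIA formula, and let $F$ be a linearization of $F_0$ with artificial bounds $B$. Define, for each model $M$ of $F$, $\mathrm{cost}(M)$ to be the number of bounds in $B$ that are not satisfied by $M$. Then $\mathrm{cost}$ is admissible: $\mathrm{cost}(M)\ge 0$ for every model $M$ of $F$, and if $\mathrm{cost}(M)=0$ then $M$ (restricted to the variables of $F_0$) is a model of $F_0$.
   Context: A QF-NIA formula is a quantifier-free CNF formula whose atoms are polynomial inequalities with integer coefficients over integer-valued variables. Artificial bounds are a finite set $B$ of constraints $V\ge L$ or $V\le U$ ($L,U\in\mathbb{Z}$) on variables of $F_0$. A linearization $F$ of $F_0$ with artificial bounds $B$ is a QF-LIA formula obtained as follows. While some non-linear monomial $Q$ occurs, pick a variable $V$ of $Q$ that has both a lower bound $l$ and an upper bound $u$ in $F_0\cup B$. Introduce a fresh integer variable $v_Q$ and replace every occurrence of $Q$ by $v_Q$. Add, for each integer $K$ with $l\le K\le u$, the clause $V=K\rightarrow v_Q=Q[V:=K]$, where $Q[V:=K]$ is $Q$ with $V$ evaluated at $K$. New non-linear monomials appearing in these clauses are processed in the same way. $F$ does not contain the bounds of $B$. A model of $F$ is an integer assignment to all variables of $F$ (original and fresh) satisfying $F$. *)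

From Stdlib Require List.
From mathcomp Require Import all_boot all_algebra.
Set Implicit Arguments. Unset Strict Implicit. Unset Printing Implicit Defensive.
Import GRing.Theory Num.Theory.
Local Open Scope ring_scope.

Definition var := nat.

(** A monomial is a finite multiset of variables, represented by a list;
    two monomials are identified when they are permutations of each other.
    The empty list is the constant monomial 1. *)
Definition monomial := seq var.

Definition poly := seq (int * monomial).

Inductive atom := AGe of poly & int | ALe of poly & int.

Definition atom_poly (a : atom) : poly :=
  match a with AGe p _ => p | ALe p _ => p end.

Definition clause := seq atom.
Definition cnf := seq clause.

Definition assignment := var -> int.

Definition eval_mono (M : assignment) (m : monomial) : int := \prod_(v <- m) M v.
Definition eval_poly (M : assignment) (p : poly) : int :=
  \sum_(t <- p) t.1 * eval_mono M t.2.

Definition sat_atom (M : assignment) (a : atom) : bool :=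
  match a with
  | AGe p c => c <= eval_poly M p
  | ALe p c => eval_poly M p <= c
  end.
Definition sat_clause (M : assignment) (C : clause) : bool := has (sat_atom M) C.
Definition sat_cnf (M : assignment) (F : cnf) : bool := all (sat_clause M) F.

Definition occurs_mono (Q : monomial) (G : cnf) : Prop :=
  exists C a t, List.In C G /\ List.In a C /\ List.In t (atom_poly a) /\ perm_eq t.2 Q.

Definition occurs_var (v : var) (G : cnf) : Prop :=
  exists C a t, List.In C G /\ List.In a C /\ List.In t (atom_poly a) /\ v \in t.2.

Definition is_linear (G : cnf) : Prop :=
  forall C a t, List.In C G -> List.In a C -> List.In t (atom_poly a) ->
    (size t.2 <= 1)%N.

Definition bound := (bool * (var * int))%type.
Definition LB (v : var) (L : int) : bound := (true, (v, L)).
Definition UB (v : var) (U : int) : bound := (false, (v, U)).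
Definition bound_var (b : bound) : var := b.2.1.

Definition sat_bound (M : assignment) (b : bound) : bool :=
  let: (islow, (v, k)) := b in if islow then k <= M v else M v <= k.

Definition cost (B : seq bound) (M : assignment) : nat :=
  count (fun b => ~~ sat_bound M b) (undup B).

Definition has_lb (F0 : cnf) (B : seq bound) (V : var) (l : int) : Prop :=
  List.In [:: AGe [:: (1, [:: V])] l] F0 \/ LB V l \in B.
Definition has_ub (F0 : cnf) (B : seq bound) (V : var) (u : int) : Prop :=
  List.In [:: ALe [:: (1, [:: V])] u] F0 \/ UB V u \in B.

Definition repl_poly (Q : monomial) (vQ : var) (p : poly) : poly :=
  [seq (if perm_eq t.2 Q then (t.1, [:: vQ]) else t) | t <- p].
Definition repl_atom (Q : monomial) (vQ : var) (a : atom) : atom :=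
  match a with
  | AGe p c => AGe (repl_poly Q vQ p) c
  | ALe p c => ALe (repl_poly Q vQ p) c
  end.
Definition repl_cnf (Q : monomial) (vQ : var) (G : cnf) : cnf :=
  [seq [seq repl_atom Q vQ a | a <- C] | C <- G].

Definition int_range (l u : int) : seq int :=
  if l <= u then [seq l + (i%:Z) | i <- iota 0 (absz (u - l)).+1] else [::].

Definition diseq (V : var) (K : int) : clause :=
  [:: ALe [:: (1, [:: V])] (K - 1); AGe [:: (1, [:: V])] (K + 1)].

(** Q[V:=K] = K^e * m, with e the multiplicity of V in Q and m = Q without V.
    The clause [V = K -> vQ = Q[V:=K]] is encoded in CNF as two clauses
    [V <> K \/ vQ - K^e m <= 0] and [V <> K \/ vQ - K^e m >= 0]. *)
Definition def_clauses (V : var) (Q : monomial) (vQ : var) (K : int) : cnf :=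
  let c := K ^+ (count_mem V Q) in
  let m := filter (predC1 V) Q in
  [:: diseq V K ++ [:: ALe [:: (1, [:: vQ]); (- c, m)] 0];
      diseq V K ++ [:: AGe [:: (1, [:: vQ]); (- c, m)] 0]].

Definition fresh_var (F0 : cnf) (B : seq bound) (G : cnf) (v : var) : Prop :=
  ~ occurs_var v F0 /\ ~ occurs_var v G /\ all (fun b => bound_var b != v) B.

Definition linstep (F0 : cnf) (B : seq bound) (G G' : cnf) : Prop :=
  exists (Q : monomial) (V : var) (l u : int) (vQ : var),
    (1 < size Q)%N /\ occurs_mono Q G /\ V \in Q /\
    has_lb F0 B V l /\ has_ub F0 B V u /\ fresh_var F0 B G vQ /\
        G' = repl_cnf Q vQ G ++ flatten [seq def_clauses V Q vQ K | K <- int_range l u].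

Inductive lin_reach (F0 : cnf) (B : seq bound) : cnf -> cnf -> Prop :=
  | lin_refl G : lin_reach F0 B G G
  | lin_step G G' G'' : linstep F0 B G G' -> lin_reach F0 B G' G'' -> lin_reach F0 B G G''.

Definition linearization (F0 : cnf) (B : seq bound) (F : cnf) : Prop :=
  lin_reach F0 B F0 F /\ is_linear F.

(* Every linearization step reflects satisfaction backwards along a model M
   that satisfies all bounds of F0 and B.  Such a step replaces a monomial Q by
   a fresh v_Q and adds, for l <= K <= u, the clauses V = K -> v_Q = Q[V:=K].
   As l <= M V <= u, the clauses for K = M V force M v_Q = M(Q), and then the
   replacement does not change the value of any polynomial under M.  The bounds
   of B hold because cost M = 0; the bounds of F0 are unit clauses over linear
   monomials, which no step rewrites, so they are still clauses of F. *)
From Pilot Require Import Defs.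
From mathcomp Require Import all_boot all_algebra zify.
Set Implicit Arguments. Unset Strict Implicit. Unset Printing Implicit Defensive.
Import GRing.Theory Num.Theory.
Local Open Scope ring_scope.

Lemma all_flatten (T : Type) (a : pred T) (ss : seq (seq T)) :
  all a (flatten ss) = all (all a) ss.
Proof. by elim: ss => //= s ss IH; rewrite all_cat IH. Qed.

Lemma sat_cnf_cat M G1 G2 : sat_cnf M (G1 ++ G2) = sat_cnf M G1 && sat_cnf M G2.
Proof. exact: all_cat. Qed.

Lemma sat_cnf_In M G C : sat_cnf M G -> List.In C G -> sat_clause M C.
Proof. by elim: G => //= C' G IH /andP[satC' satG] [<-|/(IH satG)]. Qed.

Lemma mem_int_range (l u k : int) : (k \in int_range l u) = (l <= k <= u).
Proof.
rewrite /int_range; case: ifP => [le_lu|/negbT gt_lu]; last first.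
  by rewrite in_nil; apply/esym/negbTE; apply: contra gt_lu => /andP[]; lia.
apply/mapP/idP => [[i]|/andP[le_lk le_ku]]; rewrite ?mem_iota.
  by move=> /andP[_ lt_i] ->; lia.
by exists (absz (k - l)); rewrite ?mem_iota; lia.
Qed.

Lemma eval_mono_var M V : eval_mono M [:: V] = M V.
Proof. exact: big_seq1. Qed.

Lemma eval_poly_var M V : eval_poly M [:: (1, [:: V])] = M V.
Proof. by rewrite /eval_poly big_seq1 eval_mono_var mul1r. Qed.

Lemma eval_mono_count M V (Q : monomial) :
  eval_mono M Q = M V ^+ count_mem V Q * eval_mono M (filter (predC1 V) Q).
Proof.
rewrite /eval_mono; elim: Q => [|x Q IH] /=; first by rewrite !big_nil mul1r.
rewrite big_cons IH; case: eqP => [->|/eqP neq_xV] /=.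
  by rewrite add1n exprS mulrA.
by rewrite big_cons mulrCA.
Qed.

Section Replacement.

Variables (M : assignment) (Q : monomial) (vQ : var).

Lemma eval_repl_poly p : M vQ = eval_mono M Q ->
  eval_poly M (repl_poly Q vQ p) = eval_poly M p.
Proof.
move=> MvQ; rewrite /eval_poly /repl_poly big_map; apply: eq_bigr => t _.
case: ifP => // permQ /=; congr (_ * _).
by rewrite eval_mono_var MvQ /eval_mono (perm_big _ permQ).
Qed.

Lemma sat_repl_cnf G : M vQ = eval_mono M Q ->
  sat_cnf M (repl_cnf Q vQ G) = sat_cnf M G.
Proof.
move=> MvQ; rewrite /sat_cnf /repl_cnf all_map; apply: eq_all => C /=.
rewrite /sat_clause has_map; apply: eq_has => -[p c|p c] /=;
  by rewrite eval_repl_poly.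
Qed.

Lemma sat_def_clauses V : sat_cnf M (def_clauses V Q vQ (M V)) ->
  M vQ = eval_mono M Q.
Proof.
rewrite /= /sat_clause /= /eval_poly !big_cons !big_nil /= !eval_mono_var.
rewrite (eval_mono_count M V Q) !mul1r mulNr !addr0 !orbF andbT.
by move: (_ * eval_mono _ _) => P; lia.
Qed.

Lemma sat_def_clauses_range V l u : l <= M V <= u ->
  sat_cnf M (flatten [seq def_clauses V Q vQ K | K <- int_range l u]) ->
  M vQ = eval_mono M Q.
Proof.
move=> MV_in; rewrite /sat_cnf all_flatten all_map => /allP satK.
by apply: (sat_def_clauses (V := V)); apply: satK; rewrite mem_int_range.
Qed.

End Replacement.

Definition linear_poly (p : Defs.poly) : bool := all (fun t => size t.2 <= 1)%N p.
Definition linear_clause (C : clause) : bool :=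
  all (fun a => linear_poly (atom_poly a)) C.

Lemma repl_linear_poly Q vQ p : (1 < size Q)%N -> linear_poly p ->
  repl_poly Q vQ p = p.
Proof.
move=> sizeQ linp; rewrite -[RHS]map_id; apply/eq_in_map => t /(allP linp) /=.
by case: ifP => // /perm_size ->; rewrite leqNgt sizeQ.
Qed.

Lemma repl_linear_clause Q vQ C : (1 < size Q)%N -> linear_clause C ->
  [seq repl_atom Q vQ a | a <- C] = C.
Proof.
move=> sizeQ; elim: C => //= -[p c|p c] C IH /andP[linp linC];
  by rewrite /= IH // repl_linear_poly.
Qed.

Lemma lin_reach_linear_clause F0 B G G' C : lin_reach F0 B G G' ->
  linear_clause C -> List.In C G -> List.In C G'.
Proof.
move=> reach linC; elim: reach => // {}G G1 {}G' step _ IH inG; apply: IH.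
have [Q [V [l [u [vQ [sizeQ [_ [_ [_ [_ [_ ->]]]]]]]]]]] := step.
apply: List.in_or_app; left; rewrite -(repl_linear_clause vQ sizeQ linC).
exact: List.in_map.
Qed.

Section Reflection.

Variables (F0 : cnf) (B : seq bound) (M : assignment).
Hypothesis M_lb : forall V l, has_lb F0 B V l -> l <= M V.
Hypothesis M_ub : forall V u, has_ub F0 B V u -> M V <= u.

Lemma linstep_sat G G' : linstep F0 B G G' -> sat_cnf M G' -> sat_cnf M G.
Proof.
move=> [Q [V [l [u [vQ [_ [_ [_ [lbV [ubV [_ ->]]]]]]]]]]].
rewrite sat_cnf_cat => /andP[satG satDef].
have MV_in : l <= M V <= u by rewrite M_lb ?M_ub.
by rewrite -(sat_repl_cnf G (sat_def_clauses_range MV_in satDef)).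
Qed.

Lemma lin_reach_sat G G' : lin_reach F0 B G G' -> sat_cnf M G' -> sat_cnf M G.
Proof. by elim=> // {}G G1 {}G' /linstep_sat step _ IH /IH /step. Qed.

End Reflection.

Lemma cost_eq0 B M : (cost B M == 0)%N = all (sat_bound M) B.
Proof.
rewrite /cost eqn0Ngt -has_count -all_predC all_undup.
by apply: eq_all => b /=; rewrite negbK.
Qed.

Theorem lemma3p2 (F0 : cnf) (B : seq bound) (F : cnf) :
  (forall b, b \in B -> occurs_var (bound_var b) F0) ->
  linearization F0 B F ->
  forall M : assignment, sat_cnf M F ->
    (0 <= cost B M)%N /\ (cost B M = 0%N -> sat_cnf M F0).
Proof.
move=> _ [reach _] M satF; split=> // /eqP; rewrite cost_eq0 => /allP satB.
have sat_unit C : List.In C F0 -> linear_clause C -> sat_clause M C.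
  by move=> inF0 linC; apply/sat_cnf_In/(lin_reach_linear_clause reach linC inF0).
apply: (lin_reach_sat _ _ reach satF) => V k [/sat_unit|/satB //];
  by rewrite /sat_clause /= eval_poly_var orbF; apply.
Qed.
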